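(* Assume Schinzel's Hypothesis H. Let $p$ be a prime with $p\equiv 1\pmod 8$ and $p\equiv 2\pmod 3$, and let $\mathfrak{C}_p$ be the set of septuples $(A,B,C,D,E,F,G)\in\mathbb{Z}^7$ of the parametrized form described below that satisfy (A1), (A3), (A4), (A5), (A7), and (A6) for every integer $n\ge1$. Then for every positive integer $n$ there exist infinitely many septuples in $\mathfrak{C}_p$ satisfying Hypothesis FM with respect to $(p,n)$. Parametrized form: there are nonzero odd integers $\lambda,\gamma$ with $\gcd(\lambda,3\gamma)=\gcd(p,3\gamma)=\gcd(p,\lambda)=1$, nonzero integers $\epsilon_0,\delta_0$ with $p\lambda^2\epsilon_0+9\gamma^2\delta_0=1$, and integers $\mu,t_0,F_0$ with $A=\frac{p\lambda^2-9\gamma^2}{2}$, $B=2pF_0^2(\delta_0-\epsilon_0-\mu(p\lambda^2+9\gamma^2))+(p\lambda^2+9\gamma^2)t_0F_0$, $C=2pF_0^2(\delta_0+\epsilon_0-\mu(p\lambda^2-9\gamma^2))+(p\lambda^2-9\gamma^2)t_0F_0$, $D=\frac{p\lambda^2+9\gamma^2}{2}$, $E=F_0(2pF_0(\epsilon_0+9\mu\gamma^2)-9\gamma^2t_0)(2F_0(\delta_0-p\mu\lambda^2)+\lambda^2t_0)$, $F=2F_0$, $G=3\lambda\gamma$.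
   Context: Schinzel's Hypothesis H: if $F_1,\dots,F_k\in\mathbb{Z}[x]$ are nonconstant, irreducible over $\mathbb{Q}$, with positive leading coefficients, and the product $\prod_i F_i$ has no fixed prime divisor (no prime $q$ divides $\prod_iF_i(m)$ for all integers $m$), then there are infinitely many positive integers $x$ such that $F_1(x),\dots,F_k(x)$ are simultaneously prime. $v_l$ is the $l$-adic valuation. Conditions on $(A,B,C,D,E,F,G)\in\mathbb{Z}^7$ (for a prime $p\equiv1\pmod 8$ and integer $n\ge1$): (A1) $B^2 - C^2 + 2pEF = 0$, $2AB - 2CD + pF^2 = 0$, $A^2 - D^2 + pG^2 = 0$; (A2) for every odd prime $l$ with $l\ne 3$, $l\ne p$, $l\mid E$: $p$ is a square in $\mathbb{Q}_l^\times$ or $v_l(E)-v_l(G)<6n$; (A3) $\gcd(A,D,G)=1$, $E\not\equiv 0 \pmod p$, $G\not\equiv 0\pmod p$; (A4) for every odd prime $l$ with $l\ne 3$, $l\ne p$, $l \mid \gcd(AC-BD,\ DE-CF,\ AE-BF)$: $p$ is a square in $\mathbb{Q}_l^\times$; (A5) there is an integer $H$ with $G - EH^6\equiv 0 \pmod p$ such that $A+\zeta BH^4$ is a quadratic non-residue in $\mathbb{F}_p^\times$ for every cube root of unity $\zeta\in\mathbb{F}_p^\times$; (A6) $v_3(E)-v_3(G)<6n$; (A7) $A+B\not\equiv 0\pmod 3$ and $G\equiv 0 \pmod 3$. The septuple (not all zero) satisfies Hypothesis FM with respect to $(p,n)$ if (A1)–(A5) hold and, in case $3$ is a quadratic non-residue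 in $\mathbb{F}_p^\times$, also (A6) and (A7). *)

From HB Require Import structures.
From mathcomp Require Import all_boot all_order all_algebra.
Set Implicit Arguments. Unset Strict Implicit. Unset Printing Implicit Defensive.
Import Order.TTheory GRing.Theory Num.Theory.
Local Open Scope ring_scope.

(* l-adic valuation of an integer (v_l(0) is set to 0; only used on nonzero
   integers in the statement, since (A3) forces E, G <> 0). *)
Definition vZ (l : nat) (a : int) : int := (logn l (absz a))%:Z.

(* "a is a square in Q_l^x", for a prime l and an integer a:
   a <> 0 and a is l-adically approximable by squares of l-adic units
   times a, i.e. for every m there are integers x, y with l not dividing y
   and x^2 = a y^2 mod l^m (equivalently a = y'^2 in Q_l, by density of
   Z_(l) and Hensel). *)
Definition sqQl (l : nat) (a : int) : Prop :=
  a != 0 /\ forall m : nat, exists x y : int,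
    ~~ (l%:Z %| y)%Z /\ ((l ^ m)%N%:Z %| x ^+ 2 - a * y ^+ 2)%Z.

Definition qnrFp (p : nat) (x : 'F_p) : Prop :=
  x != 0 /\ ~ (exists y : 'F_p, y ^+ 2 = x).

Definition A1 (A B C D E F G : int) (p : nat) : Prop :=
  [/\ B ^+ 2 - C ^+ 2 + 2 * p%:Z * E * F = 0,
      2 * A * B - 2 * C * D + p%:Z * F ^+ 2 = 0 &
      A ^+ 2 - D ^+ 2 + p%:Z * G ^+ 2 = 0].

Definition A2 (A B C D E F G : int) (p n : nat) : Prop :=
  forall l : nat, prime l -> odd l -> l != 3%N -> l != p ->
    (l%:Z %| E)%Z -> sqQl l p%:Z \/ vZ l E - vZ l G < (6 * n)%N%:Z.

Definition A3 (A B C D E F G : int) (p : nat) : Prop :=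
  [/\ gcdz (gcdz A D) G = 1, ~~ (p%:Z %| E)%Z & ~~ (p%:Z %| G)%Z].

Definition A4 (A B C D E F G : int) (p : nat) : Prop :=
  forall l : nat, prime l -> odd l -> l != 3%N -> l != p ->
    (l%:Z %| gcdz (gcdz (A * C - B * D) (D * E - C * F)) (A * E - B * F))%Z ->
    sqQl l p%:Z.

Definition A5 (A B C D E F G : int) (p : nat) : Prop :=
  exists H : int, (p%:Z %| G - E * H ^+ 6)%Z /\
    forall zeta : 'F_p, zeta ^+ 3 = 1 ->
      qnrFp ((A%:~R : 'F_p) + zeta * (B%:~R : 'F_p) * (H%:~R : 'F_p) ^+ 4).

Definition A6 (A B C D E F G : int) (n : nat) : Prop :=
  vZ 3 E - vZ 3 G < (6 * n)%N%:Z.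

Definition A7 (A B C D E F G : int) : Prop :=
  ~~ (3 %| A + B)%Z /\ (3 %| G)%Z.

Definition septuple := (int * int * int * int * int * int * int)%type.

Definition HypFM (p n : nat) (s : septuple) : Prop :=
  let: (A, B, C, D, E, F, G) := s in
  [/\ ~ [/\ [/\ A = 0, B = 0, C = 0 & D = 0], E = 0, F = 0 & G = 0],
      [/\ A1 A B C D E F G p, A2 A B C D E F G p n & A3 A B C D E F G p],
      A4 A B C D E F G p, A5 A B C D E F G p &
      (qnrFp (3%:R : 'F_p) -> A6 A B C D E F G n /\ A7 A B C D E F G)].

Definition param_form (p : nat) (s : septuple) : Prop :=
  let: (A, B, C, D, E, F, G) := s in
  let P := p%:Z in
  exists lam gam eps0 del0 mu t0 F0 : int,
  [/\ [/\ lam != 0, gam != 0, odd (absz lam) & odd (absz gam)],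
      [/\ gcdz lam (3 * gam) = 1, gcdz P (3 * gam) = 1 & gcdz P lam = 1],
      [/\ eps0 != 0, del0 != 0 &
          P * lam ^+ 2 * eps0 + 9 * gam ^+ 2 * del0 = 1],
      [/\ 2 * A = P * lam ^+ 2 - 9 * gam ^+ 2,
          B = 2 * P * F0 ^+ 2 * (del0 - eps0 - mu * (P * lam ^+ 2 + 9 * gam ^+ 2))
              + (P * lam ^+ 2 + 9 * gam ^+ 2) * t0 * F0,
          C = 2 * P * F0 ^+ 2 * (del0 + eps0 - mu * (P * lam ^+ 2 - 9 * gam ^+ 2))
              + (P * lam ^+ 2 - 9 * gam ^+ 2) * t0 * F0 &
          2 * D = P * lam ^+ 2 + 9 * gam ^+ 2] &
      [/\ E = F0 * (2 * P * F0 * (eps0 + 9 * mu * gam ^+ 2) - 9 * gam ^+ 2 * t0)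
              * (2 * F0 * (del0 - P * mu * lam ^+ 2) + lam ^+ 2 * t0),
          F = 2 * F0 & G = 3 * lam * gam]].

Definition inCp (p : nat) (s : septuple) : Prop :=
  let: (A, B, C, D, E, F, G) := s in
  [/\ param_form p s, [/\ A1 A B C D E F G p, A3 A B C D E F G p &
      A4 A B C D E F G p], A5 A B C D E F G p, A7 A B C D E F G &
      forall n : nat, (1 <= n)%N -> A6 A B C D E F G n].

Definition infinite_set (P : septuple -> Prop) : Prop :=
  forall l : seq septuple, exists s, P s /\ s \notin l.

Definition SchinzelH : Prop :=
  forall Fs : seq {poly int},
    (forall F, F \in Fs ->
       [/\ (1 < size F)%N,
           irreducible_poly (map_poly (intr : int -> rat) F) &
           0 < lead_coef F]) ->
    (forall q : nat, prime q ->
       exists m : int, ~~ (q%:Z %| \prod_(F <- Fs) F.[m])%Z) ->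
    forall N : int, exists x : int, N < x /\ 0 < x /\
      forall F, F \in Fs -> exists q : nat, prime q /\ F.[x] = q%:Z.

From mathcomp Require Import all_boot all_order all_algebra all_solvable all_field.
From mathcomp Require Import zify ring.
Set Implicit Arguments. Unset Strict Implicit. Unset Printing Implicit Defensive.
Import Order.TTheory GRing.Theory Num.Theory.
Local Open Scope ring_scope.

(** Take gamma = 1, mu = 0, F0 = 1 and t0 = -k in the parametrized form, so that
  E = X * Y with X = 2 p eps0 + 9 k and Y = 2 delta0 - lambda^2 k, both linear in k.
  If lambda = 1 (mod 6) is a root of 9 t^2 + 48 t - 8 modulo p (this quadratic has
  discriminant 2 * 36^2, and 2 is a square mod p since p = 1 (mod 8)), and
  k = 1/4 (mod p), k = 2 delta0 - 1 (mod 6), then (A1)-(A7) reduce to congruences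
  modulo 2, 3 and p, plus the primality of X and -Y: that makes v_l(E) <= 2, whence
  (A2) and (A6).  Since p = 2 (mod 3), cube roots of unity are trivial mod p and -3 is
  a non-residue, which gives (A5) with H = 1 as A + B = -27/4 (mod p).  Replacing k by
  k + 6 p x keeps all congruences and turns X and -Y into linear polynomials in x
  with no fixed prime divisor, so Hypothesis H makes both prime for infinitely many x. *)

Section FiniteField.
Variable F : finFieldType.

Lemma cube_root1_eq1 (z : F) : #|F| = 2 %[mod 3] -> z ^+ 3 = 1 -> z = 1.
Proof.
move=> F3 z3; have z0 : z != 0.
  by apply: contra_eq_neq z3 => ->; rewrite expr0n eq_sym oner_neq0.
have /eqP := expf_card z; rewrite (divn_eq #|F| 3) F3 exprD mulnC exprM z3 expr1n mul1r.
by rewrite [(2 %% 3)%N]/= expr2 -{3}[z]mul1r => /eqP zz; exact: (mulIf z0 zz).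
Qed.

Lemma exists_sqrt2 : #|F| = 1 %[mod 8] -> exists s : F, s ^+ 2 = 2%:R.
Proof.
move=> F8; have cardF : #|F|.-1 = (#|F| %/ 8 * 8)%N.
  by rewrite {1}(divn_eq #|F| 8) F8 addn1.
have F_gt1 : (1 < #|F|)%N by rewrite (cardD1 0) (cardD1 1) !inE oner_neq0.
have [z _ z_prim] : exists2 z, z \in enum (predC1 (0 : F)) & (#|F|.-1).-primitive_root z.
  apply/hasP/has_prim_root; [by rewrite -ltnS prednK // ltnW | | exact: enum_uniq |].
    apply/allP => x; rewrite mem_enum /= => x0; apply/unity_rootP.
    by apply: (mulIf x0); rewrite mul1r -exprSr prednK ?expf_card // ltnW.
  by rewrite -cardE cardC1.
pose x := z ^+ (#|F| %/ 8).
have x4 : x ^+ 4 = -1.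
  have : (x ^+ 4) ^+ 2 == 1.
    by rewrite -!exprM -(prim_order_dvd z_prim) cardF [(4 * 2)%N]/=.
  rewrite sqrf_eq1 => /orP[|/eqP //]; rewrite /x -exprM -(prim_order_dvd z_prim) cardF.
  by move/dvdn_leq; move: cardF; lia.
by exists (x - x ^+ 3); ring: x4.
Qed.

End FiniteField.

(* A square root w of -3 would give the cube root of unity (w - 1) / 2. *)
Lemma not_square_m3 (K : fieldType) (w : K) :
  2%:R != 0 :> K -> 3%:R != 0 :> K -> (forall z : K, z ^+ 3 = 1 -> z = 1) ->
  w ^+ 2 != -3.
Proof.
move=> n2 n3 cube1; apply/eqP => w2.
have : ((w - 1) / 2%:R) ^+ 3 = 1 by apply/eqP; rewrite -subr_eq0; apply/eqP; field: w2.
move/cube1 => omega1; have w3 : w = 3%:R.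
  by rewrite -[w](subrK 1) -[w - 1](divfK n2) omega1; ring.
have : 3%:R * (2%:R * 2%:R) = 0 :> K by rewrite -(addNr 3%:R) -w2 w3; ring.
by apply/eqP; rewrite !mulf_neq0.
Qed.

Lemma Fp_nat_neq0 (p k : nat) : prime p -> (0 < k < p)%N -> (k%:R : 'F_p) != 0.
Proof.
move=> p_pr /andP[k_gt0 k_lt_p]; rewrite -(dvdn_pcharf (pchar_Fp p_pr)).
by apply/negP => /(dvdn_leq k_gt0); rewrite leqNgt k_lt_p.
Qed.

Lemma Fp_small_neq0 (p j : nat) : prime p -> p = 1 %[mod 8] -> (0 < j < 17)%N ->
  j%:R != 0 :> 'F_p.
Proof.
move=> p_pr p_mod8 j_bd; apply: Fp_nat_neq0 => //.
have p_neq9 : p != 9%N by apply: contraTneq p_pr => ->.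
by have := prime_gt1 p_pr; lia.
Qed.

Lemma Fp_intr_progression (p : nat) (r c : int) (l : 'F_p) :
  c%:~R != 0 :> 'F_p -> exists m : int, (r + c * m)%:~R = l :> 'F_p.
Proof.
move=> c_neq0; set z := (l - r%:~R) / c%:~R; exists (nat_of_ord z)%:Z.
rewrite intrD intrM (_ : (nat_of_ord z)%:Z%:~R = z); last by rewrite -[RHS]natr_Zp.
by rewrite /z; field.
Qed.

Lemma qnrFp_m3_mul_sqr (p : nat) (c : 'F_p) : prime p -> p = 2 %[mod 3] -> p != 2%N ->
  c != 0 -> qnrFp (- 3%:R * c ^+ 2).
Proof.
move=> p_pr p_mod3 p_neq2 c_neq0; have p_gt3 : (3 < p)%N.
  by have := prime_gt1 p_pr; move: p_mod3 p_neq2; lia.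
have F2 : 2%:R != 0 :> 'F_p by rewrite Fp_nat_neq0 //; lia.
have F3 : 3%:R != 0 :> 'F_p by rewrite Fp_nat_neq0 //; lia.
have cube1 (z : 'F_p) : z ^+ 3 = 1 -> z = 1 by apply: cube_root1_eq1; rewrite card_Fp.
have not_sqr : ~ exists y, y ^+ 2 = - 3%:R * c ^+ 2.
  move=> [y y2]; have /negP := not_square_m3 (y / c) F2 F3 cube1.
  by rewrite expr_div_n y2 mulfK ?expf_neq0.
by split=> //; apply/eqP => c0; apply: not_sqr; exists 0; rewrite c0 expr0n.
Qed.

Lemma Euclid_dvdzM (q : nat) (a b : int) : prime q ->
  (q%:Z %| a * b)%Z = (q%:Z %| a)%Z || (q%:Z %| b)%Z.
Proof. by move=> q_pr; rewrite !dvdzE abszM Euclid_dvdM. Qed.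

Lemma coprimez_prime (q : nat) (a : int) : prime q -> coprimez a q%:Z = ~~ (q%:Z %| a)%Z.
Proof. by move=> q_pr; rewrite coprimezE coprime_sym prime_coprime // dvdzE. Qed.

Lemma vZ_mul_primes_sub_lt (l n : nat) (a b c : int) : prime `|a|%N -> prime `|b|%N ->
  (0 < n)%N -> vZ l (a * b) - vZ l c < (6 * n)%N%:Z.
Proof.
move=> a_pr b_pr n_gt0; have : (logn l `|(a * b)%R| <= 2)%N.
  by rewrite abszM lognM ?prime_gt0 // !logn_prime //; case: (l == _); case: (l == _).
by rewrite /vZ; lia.
Qed.

Lemma linear_pair_nonvanishing (K : fieldType) (a1 b1 a2 b2 : K) (s : seq K) :
  uniq s -> (2 < size s)%N -> (a1 != 0) || (b1 != 0) -> (a2 != 0) || (b2 != 0) ->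
  has (fun x => (a1 * x + b1) * (a2 * x + b2) != 0) s.
Proof.
move=> s_uniq s_size nz1 nz2; apply/negPn/negP => /hasPn s_roots.
have lin_neq0 (a b : K) : (a != 0) || (b != 0) -> a *: 'X + b%:P != 0 :> {poly K}.
  apply: contraTneq => /(congr1 (fun q : {poly K} => (q`_1, q`_0))).
  by rewrite !coefE /= mulr1 mulr0 addr0 add0r => -[-> ->]; rewrite eqxx.
have lin_size (a b : K) : (size (a *: 'X + b%:P : {poly K})%R <= 2)%N.
  rewrite (leq_trans (size_polyD _ _)) // geq_max (leq_trans (size_polyC_leq1 _)) // andbT.
  by rewrite (leq_trans (size_scale_leq _ _)) ?size_polyX.
set g := (a1 *: 'X + b1%:P) * (a2 *: 'X + b2%:P).
have g_neq0 : g != 0 by rewrite mulf_neq0 ?lin_neq0.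
have g_size : (size g <= 3)%N.
  rewrite size_mul ?lin_neq0 //; move: (lin_size a1 b1) (lin_size a2 b2).
  by move: (size _) (size _) => m1 m2; lia.
have g_roots : all (root g) s.
  by apply/allP => x /s_roots; rewrite negbK /root /g !hornerE.
by rewrite (roots_geq_poly_eq0 g_roots s_uniq (leq_trans g_size s_size)) eqxx in g_neq0.
Qed.

(* The factor 2 takes care of q = 2, where both forms are odd at x = 0. *)
Lemma linear_pair_no_fixed_prime (q : nat) (a1 b1 a2 b2 : int) : prime q ->
  ~~ ((q%:Z %| b1) && (q%:Z %| 2 * a1))%Z -> ~~ ((q%:Z %| b2) && (q%:Z %| 2 * a2))%Z ->
  exists x : int, ~~ (q%:Z %| (a1 * x + b1) * (a2 * x + b2))%Z.
Proof.
move=> q_pr; have [-> | q_neq2] := eqVneq q 2%N => nz1 nz2.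
  exists 0; rewrite !mulr0 !add0r Euclid_dvdzM //.
  by move: nz1 nz2; rewrite !dvdz_mulr // !andbT => /negPf-> /negPf->.
have Fq_dvdz := dvdz_pcharf (pchar_Fp q_pr).
have lin_nz a b : ~~ ((q%:Z %| b) && (q%:Z %| 2 * a))%Z ->
    (a%:~R != 0 :> 'F_q) || (b%:~R != 0 :> 'F_q).
  by rewrite -!Fq_dvdz -negb_and; apply: contraNN => /andP[qa ->]; rewrite dvdz_mull.
have q_gt2 : (2 < q)%N by have := prime_gt1 q_pr; move: q_neq2; lia.
have uniq012 : uniq (map (intr : int -> 'F_q) [:: 0; 1; 2]).
  rewrite /= !inE !rmorph0 !rmorph1 eq_sym oner_eq0 eq_sym (Fp_nat_neq0 q_pr) ?q_gt2 //=.
  by rewrite andbT eq_sym -subr_eq0 (_ : 2%:~R - 1 = 1) ?oner_eq0 //; ring.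
have /hasP[_ /mapP[i _ ->] nz] :=
  linear_pair_nonvanishing uniq012 isT (lin_nz _ _ nz1) (lin_nz _ _ nz2).
by exists i; rewrite Fq_dvdz intrM !intrD !intrM.
Qed.

Lemma size2_irreducible (K : fieldType) (f : {poly K}) : size f = 2%N -> irreducible_poly f.
Proof.
move=> f_size; split; first by rewrite f_size.
move=> g g_size g_dvd; have f_neq0 : f != 0 by rewrite -size_poly_eq0 f_size.
have g_neq0 : g != 0 by apply/eqP => g0; move: g_dvd; rewrite g0 dvd0p (negbTE f_neq0).
have := dvdp_leq f_neq0 g_dvd; rewrite -(dvdp_size_eqp g_dvd) f_size.
by move: g_size g_neq0; rewrite -size_poly_eq0; case: (size g) => [|[|[|]]].
Qed.

Definition lin_poly (a b : int) : {poly int} := a *: 'X + b%:P.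

Lemma horner_lin_poly (a b x : int) : (lin_poly a b).[x] = a * x + b.
Proof. by rewrite /lin_poly !hornerE. Qed.

Lemma lin_poly_irreducible (a b : int) : 0 < a ->
  [/\ (1 < size (lin_poly a b))%N,
      irreducible_poly (map_poly (intr : int -> rat) (lin_poly a b)) &
      0 < lead_coef (lin_poly a b)].
Proof.
move=> a_gt0; have a_neq0 : a != 0 by rewrite gt_eqF.
have small_b : (size (b%:P : {poly int}) < size (a *: 'X : {poly int}))%N.
  by rewrite size_scale // size_polyX (leq_ltn_trans (size_polyC_leq1 b)).
have lin_size : size (lin_poly a b) = 2%N by rewrite size_polyDl // size_scale ?size_polyX.
split; first by rewrite lin_size.
  by apply: size2_irreducible; rewrite size_map_inj_poly //; exact: intr_inj.
by rewrite lead_coefDl // lead_coefZ lead_coefX mulr1.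
Qed.

Lemma infinite_set_unbounded (S : septuple -> Prop) (f : septuple -> int) :
  (forall N, exists s, S s /\ N < f s) -> infinite_set S.
Proof.
move=> unbounded l; have [s [Ss lt_s]] := unbounded (\sum_(t <- l) `|f t|).
exists s; split=> //; apply: contraTN lt_s => s_in; rewrite -leNgt.
by rewrite (le_trans (ler_norm _)) // (big_rem s s_in) /= lerDl sumr_ge0.
Qed.

Lemma SchinzelH_linear_pair (a1 b1 a2 b2 : int) : SchinzelH -> 0 < a1 -> 0 < a2 ->
  (forall q : nat, prime q -> exists x, ~~ (q%:Z %| (a1 * x + b1) * (a2 * x + b2))%Z) ->
  forall N : int, exists x : int,
    [/\ N < x, 0 < x, prime (absz (a1 * x + b1)) & prime (absz (a2 * x + b2))].
Proof.
move=> SH a1_gt0 a2_gt0 no_fixed N.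
have f_ok f : f \in [:: lin_poly a1 b1; lin_poly a2 b2] ->
    [/\ (1 < size f)%N, irreducible_poly (map_poly (intr : int -> rat) f) & 0 < lead_coef f].
  by rewrite !inE => /orP[]/eqP->; apply: lin_poly_irreducible.
have prod_ok q : prime q -> exists x : int,
    ~~ (q%:Z %| \prod_(f <- [:: lin_poly a1 b1; lin_poly a2 b2]) f.[x])%Z.
  by move=> /no_fixed[x q_ndvd]; exists x; rewrite big_cons big_seq1 !horner_lin_poly.
have [x [Nx [x_gt0 f_prime]]] := SH _ f_ok prod_ok N.
have [q1 [q1_pr f1x]] := f_prime _ (mem_head _ _).
have [q2 [q2_pr f2x]] : exists q : nat, prime q /\ (lin_poly a2 b2).[x] = q%:Z.
  by apply: f_prime; rewrite !inE eqxx orbT.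
by exists x; rewrite -!horner_lin_poly f1x f2x.
Qed.

Definition septuple_of (p : nat) (A L X Y : int) : septuple :=
  (A, p%:Z * Y - X, p%:Z * Y + X, A + 9, X * Y, 2, 3 * L).

Section SeptupleConditions.
Variables (p : nat) (A L X Y : int).
Hypotheses (A_rel : 2 * A + 9 = p%:Z * L ^+ 2) (XY_rel : L ^+ 2 * X + 9 * Y = 2).
Local Notation P := p%:Z.

Lemma septuple_A1 : A1 A (P * Y - X) (P * Y + X) (A + 9) (X * Y) 2 (3 * L) p.
Proof. by split; nia. Qed.

Lemma septuple_A3 : ~~ (3 %| A)%Z -> ~~ (P %| X * Y)%Z -> ~~ (P %| 3 * L)%Z ->
  A3 A (P * Y - X) (P * Y + X) (A + 9) (X * Y) 2 (3 * L) p.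
Proof.
move=> A_mod3 pXY pL; split=> //; apply/eqP.
rewrite gcdzDl (_ : 9 = 3 ^+ 2) //; have /eqP -> : coprimez A (3 ^+ 2).
  by rewrite coprimez_pexpr // (coprimez_prime _ (isT : prime 3)).
by rewrite gcd1z.
Qed.

Lemma septuple_A7 : ~~ (3 %| A + (P * Y - X))%Z ->
  A7 A (P * Y - X) (P * Y + X) (A + 9) (X * Y) 2 (3 * L).
Proof. by split; rewrite ?dvdz_mulr. Qed.

Hypothesis p_prime : prime p.

Lemma septuple_A4 : A4 A (P * Y - X) (P * Y + X) (A + 9) (X * Y) 2 (3 * L) p.
Proof.
move=> l l_pr l_odd l_neq3 l_neqp; rewrite !dvdz_gcd => /andP[/andP[l_AC l_DE] l_AE].
have l_ndvd (q : nat) : prime q -> q != l -> ~~ (l%:Z %| q%:Z)%Z.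
  by move=> q_pr; apply: contraNN; rewrite dvdzE /= dvdn_prime2 // eq_sym.
have l_LX : (l%:Z %| L ^+ 2 * X - 1)%Z.
  have : (l%:Z %| 2 * P * (L ^+ 2 * X - 1))%Z.
    by rewrite (_ : 2 * P * _ = A * (P * Y + X) - (P * Y - X) * (A + 9)) //; nia.
  have l_2 : ~~ (l%:Z %| 2)%Z by apply: l_ndvd => //; apply: contraTneq l_odd => <-.
  by rewrite !Euclid_dvdzM // (negbTE l_2) (negbTE (l_ndvd p _ _)) // eq_sym.
have l_X : (l%:Z %| X)%Z.
  have : (l%:Z %| 3 * X)%Z.
    have -> : 3 * X = - ((A + 9) * (X * Y) - (P * Y + X) * 2 - (A * (X * Y) - (P * Y - X) * 2))
                      - X * (L ^+ 2 * X - 1).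
      have -> : (A + 9) * (X * Y) - (P * Y + X) * 2 - (A * (X * Y) - (P * Y - X) * 2)
                = X * (9 * Y) - 4 * X by ring.
      by rewrite (_ : 9 * Y = 2 - L ^+ 2 * X); [ring | rewrite -XY_rel; ring].
    by rewrite rpredB ?dvdz_mull // rpredN rpredB.
  by rewrite Euclid_dvdzM // (negbTE (l_ndvd 3%N _ _)) // eq_sym.
have : (l%:Z %| L ^+ 2 * X - (L ^+ 2 * X - 1))%Z by rewrite rpredB ?dvdz_mull.
by rewrite subKr dvdzE /= dvdn1 => /eqP l1; rewrite l1 in l_pr.
Qed.

Lemma septuple_A5 : p = 2 %[mod 3] -> (P %| 3 * L - X * Y)%Z ->
  qnrFp (A%:~R + (P * Y - X)%:~R : 'F_p) ->
  A5 A (P * Y - X) (P * Y + X) (A + 9) (X * Y) 2 (3 * L) p.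
Proof.
move=> p_mod3 pLXY AB_Fp_qnr; exists 1; rewrite expr1n mulr1; split=> // z z3.
have -> : z = 1 by apply: cube_root1_eq1 z3; rewrite card_Fp.
by rewrite rmorph1 expr1n mulr1 mul1r.
Qed.

End SeptupleConditions.

(* X and Y are the two factors of E, with L, e, d standing for lambda, eps0, delta0, and
   2 A = p L^2 - 9 (the division is exact for the odd values of p L^2 used below). *)
Definition Xfac (p : nat) (e k : int) : int := 2 * p%:Z * e + 9 * k.
Definition Yfac (L d k : int) : int := 2 * d - L ^+ 2 * k.
Definition Acoef (p : nat) (L : int) : int := ((p%:Z * L ^+ 2 - 9) %/ 2)%Z.

Section Construction.
Variables (p : nat) (L e d k : int).
Hypotheses (p_mod8 : p = 1 %[mod 8]) (p_mod3 : p = 2 %[mod 3]).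
Hypothesis bezout : p%:Z * L ^+ 2 * e + 9 * d = 1.
Hypotheses (L_mod6 : (6 %| L - 1)%Z) (k_mod6 : (6 %| k - 2 * d + 1)%Z).
Local Notation P := p%:Z.
Local Notation X := (Xfac p e k).
Local Notation Y := (Yfac L d k).
Local Notation A := (Acoef p L).

Lemma Acoef_rel : 2 * A + 9 = P * L ^+ 2.
Proof.
rewrite mulrC divzK; first ring.
clear -L_mod6 p_mod8; nia.
Qed.

Lemma Xfac_Yfac_rel : L ^+ 2 * X + 9 * Y = 2.
Proof.
have -> : L ^+ 2 * X + 9 * Y = 2 * (P * L ^+ 2 * e + 9 * d) by rewrite /Xfac /Yfac; ring.
by rewrite bezout mulr1.
Qed.

Lemma Xfac_coprime6 : ~~ (2 %| X)%Z && ~~ (3 %| X)%Z.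
Proof. rewrite /Xfac; clear -p_mod3 bezout L_mod6 k_mod6; nia. Qed.

Lemma Yfac_coprime6 : ~~ (2 %| Y)%Z && ~~ (3 %| Y)%Z.
Proof. rewrite /Yfac; clear -L_mod6 k_mod6; nia. Qed.

Lemma Acoef_mod3 : ~~ (3 %| A)%Z.
Proof. have := Acoef_rel; clear -p_mod3 L_mod6; nia. Qed.

Lemma AB_mod3 : ~~ (3 %| A + (P * Y - X))%Z.
Proof. rewrite /Xfac /Yfac; have := Acoef_rel; nia. Qed.

(* Together these make X Y = 3 L (mod p). *)
Hypotheses (p_prime : prime p) (L_modp : (P %| 9 * L ^+ 2 + 48 * L - 8)%Z)
  (k_modp : (P %| 4 * k - 1)%Z).

Let Fp_dvdz := dvdz_pcharf (pchar_Fp p_prime).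

Let Fp_neq0 (j : nat) : (0 < j < 17)%N -> j%:R != 0 :> 'F_p.
Proof. exact: Fp_small_neq0. Qed.

Let P_Fp : (P%:~R : 'F_p) = 0. Proof. exact: pchar_Fp_0. Qed.

Let k_Fp : (k%:~R : 'F_p) = 4%:R^-1.
Proof.
move: k_modp; rewrite Fp_dvdz => /eqP k4.
have -> : (k%:~R : 'F_p) = ((4 * k - 1)%:~R + 1) / 4%:R by field; rewrite Fp_neq0.
by rewrite k4 add0r mul1r.
Qed.

Let d_Fp : (d%:~R : 'F_p) = 9%:R^-1.
Proof.
have d9 : 9%:R * d%:~R = 1 :> 'F_p.
  by rewrite -[RHS](rmorph1 (intr : int -> 'F_p)) -bezout; ring: P_Fp.
have -> : (d%:~R : 'F_p) = 9%:R * d%:~R / 9%:R by field; rewrite Fp_neq0.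
by rewrite d9 mul1r.
Qed.

Let A_Fp : (A%:~R : 'F_p) = - (9%:R / 2%:R).
Proof.
have -> : (A%:~R : 'F_p) = ((2 * A + 9)%:~R - 9%:R) / 2%:R by field; rewrite Fp_neq0.
by rewrite Acoef_rel intrM P_Fp mul0r sub0r mulNr.
Qed.

Let L_root : 9%:R * L%:~R ^+ 2 + 48%:R * L%:~R - 8%:R = 0 :> 'F_p.
Proof. by move: L_modp; rewrite Fp_dvdz => /eqP <-; ring. Qed.

Lemma Xfac_Fp : (X%:~R : 'F_p) = 9%:R / 4%:R.
Proof. by rewrite /Xfac -k_Fp; ring: P_Fp. Qed.

Lemma Xfac_Yfac_Fp : ((X * Y)%:~R : 'F_p) = (3 * L)%:~R.
Proof.
apply/eqP; rewrite -subr_eq0; apply/eqP.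
have -> : ((X * Y)%:~R - (3 * L)%:~R : 'F_p)
          = - (9%:R * L%:~R ^+ 2 + 48%:R * L%:~R - 8%:R) / 16%:R.
  rewrite intrM Xfac_Fp (_ : Y%:~R = 2%:R * 9%:R^-1 - L%:~R ^+ 2 * 4%:R^-1); last first.
    by rewrite /Yfac -k_Fp -d_Fp; ring.
  field.
  by rewrite !Fp_neq0.
by rewrite L_root oppr0 mul0r.
Qed.

Lemma L_Fp_neq0 : (L%:~R : 'F_p) != 0.
Proof.
apply/eqP => L0; move: L_root; rewrite L0 expr0n /= !mulr0 !add0r => /eqP.
by rewrite oppr_eq0 (negbTE (Fp_neq0 (j := 8) isT)).
Qed.

Lemma Xfac_Yfac_modp :
  [/\ ~~ (P %| X)%Z, ~~ (P %| Y)%Z, ~~ (P %| L)%Z, ~~ (P %| 3 * L)%Z &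
      (P %| 3 * L - X * Y)%Z].
Proof.
have L3_neq0 : ((3 * L)%:~R : 'F_p) != 0.
  by rewrite intrM mulf_neq0 ?L_Fp_neq0 // (Fp_neq0 (j := 3)).
have := L3_neq0; rewrite -Xfac_Yfac_Fp intrM mulf_eq0 negb_or => /andP[X_neq0 Y_neq0].
by rewrite !Fp_dvdz X_neq0 Y_neq0 L_Fp_neq0 L3_neq0 intrB Xfac_Yfac_Fp subrr.
Qed.

Lemma AB_Fp_qnr : qnrFp (A%:~R + (P * Y - X)%:~R : 'F_p).
Proof.
have -> : (A%:~R + (P * Y - X)%:~R : 'F_p) = - 3%:R * (3%:R / 2%:R) ^+ 2.
  by rewrite A_Fp intrB intrM P_Fp mul0r sub0r Xfac_Fp; field; rewrite !Fp_neq0.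
apply: qnrFp_m3_mul_sqr; rewrite ?mulf_neq0 ?invr_neq0 ?Fp_neq0 //.
by apply/eqP => p2; move: p_mod8; rewrite p2.
Qed.

Lemma septuple_param_form : param_form p (septuple_of p A L X Y).
Proof.
have [_ _ pL _ _] := Xfac_Yfac_modp.
have A_rel := Acoef_rel.
exists L, 1, e, d, 0, (- k), 1; rewrite !expr1n !mulr1 !mul1r ?mul0r ?mulr0 ?subr0 ?addr0.
split.
- by split=> //; clear -L_mod6; lia.
- split; apply/eqP.
  + by change (coprimez L 3%:Z); rewrite coprimez_prime //; clear -L_mod6; lia.
  + by change (coprimez P 3%:Z); rewrite coprimez_prime //; clear -p_mod3; lia.
  + by rewrite gcdzC; change (coprimez L P); rewrite coprimez_prime.
- split=> //.
    by apply/eqP => e0; move: bezout; rewrite e0 mulr0 add0r; lia.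
  by apply/eqP => d0; move: d_Fp; rewrite d0 rmorph0 => /esym/eqP;
     rewrite invr_eq0 (negbTE (Fp_neq0 (j := 9) isT)).
- by split; rewrite /Xfac /Yfac; lia.
- by split; rewrite /Xfac /Yfac; ring.
Qed.

Lemma septuple_in_Cp_FM (n : nat) : prime `|X| -> prime `|Y| -> (0 < n)%N ->
  inCp p (septuple_of p A L X Y) /\ HypFM p n (septuple_of p A L X Y).
Proof.
move=> X_pr Y_pr n_gt0; have [pX pY _ pL3 pLXY] := Xfac_Yfac_modp.
have pXY : ~~ (P %| X * Y)%Z by rewrite Euclid_dvdzM // negb_or pX.
have A1_ok := septuple_A1 Acoef_rel Xfac_Yfac_rel.
have A3_ok := septuple_A3 Acoef_mod3 pXY pL3.
have A4_ok := septuple_A4 Acoef_rel Xfac_Yfac_rel p_prime.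
have A5_ok := septuple_A5 p_prime p_mod3 pLXY AB_Fp_qnr.
have A7_ok := septuple_A7 L AB_mod3.
have small_val l m := vZ_mul_primes_sub_lt l (3 * L) X_pr Y_pr (n := m).
split; first by split=> //; [exact: septuple_param_form | move=> m; apply: small_val].
split=> //; first by case=> _ _ /eqP.
  by split=> // l *; right; apply: small_val.
by split=> //; apply: small_val.
Qed.

Lemma shifted_pair_no_fixed_prime (q : nat) : prime q ->
  exists x : int, ~~ (q%:Z %| (54 * P * x + X) * (6 * P * L ^+ 2 * x + - Y))%Z.
Proof.
move=> q_pr; have [pX pY _ _ _] := Xfac_Yfac_modp.
have /andP[X2 X3] := Xfac_coprime6; have /andP[Y2 Y3] := Yfac_coprime6.
have q_23p (c : nat) z : primes c = [:: 2; 3]%N -> (q%:Z %| z)%Z ->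
    ~~ (2 %| z)%Z -> ~~ (3 %| z)%Z -> ~~ (P %| z)%Z -> ~~ (q%:Z %| c%:Z * P)%Z.
  move=> c_primes qz z2 z3 zP; rewrite Euclid_dvdzM // negb_or; apply/andP; split.
    apply/negP; rewrite dvdzE /= => qc; have : q \in primes c.
      by rewrite mem_primes q_pr qc andbT lt0n; apply/eqP => c0; rewrite c0 in c_primes.
    by rewrite c_primes !inE => /orP[]/eqP q23; rewrite q23 in qz; [case/negP: z2 | case/negP: z3].
  by apply: contraNN zP => qP; move: qP qz; rewrite dvdzE /= dvdn_prime2 // => /eqP ->.
apply: linear_pair_no_fixed_prime => //; apply/andP => -[qz].
  rewrite (_ : 2 * _ = 108%:Z * P); last ring.
  by apply/negP/(q_23p 108%N X).
rewrite (_ : 2 * _ = 12%:Z * P * (L * L)); last ring.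
rewrite Euclid_dvdzM // (@Euclid_dvdzM q L L) // orbb => /orP[|qL].
  by apply/negP/(q_23p 12%N (- Y)); rewrite // ?rpredN.
have qY : (q%:Z %| Y)%Z by rewrite -rpredN.
have : (q%:Z %| L ^+ 2 * X + 9 * Y)%Z.
  by apply: rpredD; [rewrite dvdz_mulr // expr2 dvdz_mulr | rewrite dvdz_mull].
by rewrite Xfac_Yfac_rel dvdzE /= dvdn_prime2 // => /eqP q2; rewrite q2 in qY; case/negP: Y2.
Qed.

End Construction.

Definition admissible (p : nat) (L e d k : int) : Prop :=
  [/\ p%:Z * L ^+ 2 * e + 9 * d = 1, (6 %| L - 1)%Z, (6 %| k - 2 * d + 1)%Z,
      (p%:Z %| 9 * L ^+ 2 + 48 * L - 8)%Z & (p%:Z %| 4 * k - 1)%Z].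

Lemma admissible_shift (p : nat) (L e d k x : int) :
  admissible p L e d k -> admissible p L e d (k + 6 * p%:Z * x).
Proof.
case=> bezout L_mod6 k_mod6 L_modp k_modp; split=> //.
  rewrite (_ : _ - _ + _ = k - 2 * d + 1 + 6 * (p%:Z * x)); last ring.
  by rewrite rpredD // dvdz_mulr.
rewrite (_ : _ - _ = 4 * k - 1 + p%:Z * (24 * x)); last ring.
by rewrite rpredD // dvdz_mulr.
Qed.

Lemma Xfac_shift (p : nat) (e k x : int) :
  Xfac p e (k + 6 * p%:Z * x) = 54 * p%:Z * x + Xfac p e k.
Proof. by rewrite /Xfac; ring. Qed.

Lemma Yfac_shift (p : nat) (L d k x : int) :
  - Yfac L d (k + 6 * p%:Z * x) = 6 * p%:Z * L ^+ 2 * x + - Yfac L d k.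
Proof. by rewrite /Yfac; ring. Qed.

Lemma admissible_exists (p : nat) : prime p -> p = 1 %[mod 8] -> p = 2 %[mod 3] ->
  exists L e d k, admissible p L e d k.
Proof.
move=> p_pr p_mod8 p_mod3; have Fp_dvdz := dvdz_pcharf (pchar_Fp p_pr).
have Fp_neq0 (j : nat) : (0 < j < 17)%N -> j%:R != 0 :> 'F_p by exact: Fp_small_neq0.
have [s s2] : exists s : 'F_p, s ^+ 2 = 2%:R by apply: exists_sqrt2; rewrite card_Fp.
have F6 : (6%:~R : 'F_p) != 0 by exact: (Fp_neq0 6%N).
have [m Lm] := Fp_intr_progression 1 ((6%:R * s - 8%:R) / 3%:R) F6.
set L := 1 + 6 * m in Lm.
have L_modp : (p%:Z %| 9 * L ^+ 2 + 48 * L - 8)%Z.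
  rewrite Fp_dvdz (_ : _%:~R = 9%:R * L%:~R ^+ 2 + 48%:R * L%:~R - 8%:R); last by ring.
  by rewrite Lm; apply/eqP; field: s2; rewrite Fp_neq0.
have L_cop : coprimez (p%:Z * L ^+ 2) 9.
  rewrite (_ : 9 = 3 ^+ 2) // coprimez_pexpr // coprimezMl coprimez_pexpl //.
  by rewrite !(coprimez_prime _ (isT : prime 3)) /L; lia.
have [u [v uv]] := Bezoutz (p%:Z * L ^+ 2) 9; rewrite (eqP L_cop) in uv.
have [r kr] := Fp_intr_progression (2 * v - 1) 4%:R^-1 F6.
exists L, u, v, (2 * v - 1 + 6 * r); split.
- by rewrite -[RHS]uv; ring.
- by rewrite /L addrC addKr dvdz_mulr.
- by rewrite (_ : _ - _ + _ = 6 * r) ?dvdz_mulr //; ring.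
- exact: L_modp.
by rewrite Fp_dvdz intrB intrM kr; apply/eqP; field; rewrite Fp_neq0.
Qed.

Theorem corollary9p6 :
  SchinzelH ->
  forall p : nat, prime p -> p = 1 %[mod 8] -> p = 2 %[mod 3] ->
  forall n : nat, (0 < n)%N ->
    infinite_set (fun s => inCp p s /\ HypFM p n s).
Proof.
move=> SH p p_pr p_mod8 p_mod3 n n_gt0.
have [L [e [d [k adm]]]] := admissible_exists p_pr p_mod8 p_mod3.
have [bezout L_mod6 k_mod6 L_modp k_modp] := adm.
apply: (infinite_set_unbounded (f := fun s => s.1.1.1.1.2 - s.1.1.1.1.1.2)) => N.
have [||x [Nx x_gt0 X_pr Y_pr]] := SchinzelH_linear_pair SH _ _
  (shifted_pair_no_fixed_prime p_mod8 p_mod3 bezout L_mod6 k_mod6 p_pr L_modp k_modp)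
  (`|N| + `|Xfac p e k|).
- by rewrite ltz_nat; move: (prime_gt0 p_pr); lia.
- have L_neq0 : L != 0 by clear -L_mod6; lia.
  by have := prime_gt0 p_pr; clear -L_neq0; nia.
rewrite -Xfac_shift in X_pr; rewrite -Yfac_shift abszN in Y_pr.
have [bezout' L_mod6' k_mod6' L_modp' k_modp'] := admissible_shift x adm.
exists (septuple_of p (Acoef p L) L (Xfac p e (k + 6 * p%:Z * x)) (Yfac L d (k + 6 * p%:Z * x))).
split; first exact: septuple_in_Cp_FM.
rewrite /= Xfac_shift; have := prime_gt0 p_pr.
have := ler_norm N; have := lerNnormlW (lexx `|Xfac p e k|); clear -Nx x_gt0; nia.
Qed.
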